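(* Let $\mathbb K$ be a field with $2\in\mathbb K^\times$, $A$ a unital commutative associative $\mathbb K$-algebra, $\mathfrak k$ a $\mathbb K$-Lie algebra, $\mathfrak g=A\otimes\mathfrak k$ and $\mathfrak z$ a vector space. A $\mathfrak z$-valued 2-cocycle $f=f_1\circ p_1+f_2\circ p_2+f_3\circ p_3$ on $\mathfrak g$ is a coboundary if and only if $f_1=0$, $f_3=0$, and there exists a linear map $\ell:A\to\mathrm{Lin}(\mathfrak k,\mathfrak z)$ with $\tilde f_2(a)=d_{\mathfrak k}(\ell(a))$ for all $a\in A$.
   Context: $\mathfrak g$ has bracket $[a\otimes x,a'\otimes x']=aa'\otimes[x,x']$, $ax=a\otimes x$, unit $\mathbf 1$. $v\wedge w=\tfrac12(v\otimes w-w\otimes v)$, $v\vee w=\tfrac12(v\otimes w+w\otimes v)$. $I_A$ is the kernel of multiplication $S^2(A)\to A$. $p_1(ax\wedge by)=a\wedge b\otimes x\vee y$, $p_2(ax\wedge by)=ab\otimes x\wedge y$, $p_3(ax\wedge by)=(a\vee b-ab\vee\mathbf 1)\otimes x\wedge y$ give an isomorphism $\Lambda^2(\mathfrak g)\cong(\Lambda^2(A)\otimes S^2(\mathfrak k))\oplus(A\otimes\Lambda^2(\mathfrak k))\oplus(I_A\otimes\Lambda^2(\mathfrak k))$. A 2-cocycle is a linear map $\Lambda^2(\mathfrak g)\to\mathfrak z$ vanishing on the span of $[u,v]\wedge w+[v,w]\wedge u+[w,u]\wedge v$; it is a coboundary if it equals $u\wedge v\mapsto-\ell'([u,v])$ for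 some linear $\ell':\mathfrak g\to\mathfrak z$. $\tilde f_2(a)(x,y)=f_2(a\otimes x\wedge y)$. For linear $\lambda:\mathfrak k\to\mathfrak z$, $(d_{\mathfrak k}\lambda)(x,y)=-\lambda([x,y])$. *)

From HB Require Import structures.
From mathcomp Require Import all_boot all_order all_algebra.
Set Implicit Arguments. Unset Strict Implicit. Unset Printing Implicit Defensive.
Import GRing.Theory.
Local Open Scope ring_scope.

Definition lin_map (K : fieldType) (U V : lmodType K) (f : U -> V) : Prop :=
  forall (c : K) (u v : U), f (c *: u + v) = c *: f u + f v.

Definition is_lie_bracket (K : fieldType) (k : lmodType K) (br : k -> k -> k)
  : Prop :=
  (forall y, lin_map (fun x => br x y)) /\ (forall x, lin_map (br x)) /\
  (forall x, br x x = 0) /\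
  (forall x y w, br x (br y w) + br y (br w x) + br w (br x y) = 0).

(* A bilinear map A x k -> z, i.e. a linear map A (x) k -> z, equivalently a
   linear map A -> Lin(k, z). *)
Definition bilin (K : fieldType) (A k z : lmodType K) (L : A -> k -> z) : Prop :=
  (forall x, lin_map (fun a => L a x)) /\ (forall a, lin_map (L a)).

(* A linear map Lambda^2(A (x) k) -> z is encoded by the 4-linear map
   F a x b y := f (ax /\ by)  (A (x) k (x) A (x) k -> z), which must be
   antisymmetric under (a,x) <-> (b,y). *)
Definition multilin4 (K : fieldType) (A k z : lmodType K)
  (F : A -> k -> A -> k -> z) : Prop :=
  (forall x b y, lin_map (fun a => F a x b y)) /\
  (forall a b y, lin_map (fun x => F a x b y)) /\
  (forall a x y, lin_map (fun b => F a x b y)) /\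
  (forall a x b, lin_map (fun y => F a x b y)).

(* F encodes a z-valued 2-cocycle on g = A (x) k (bracket [ax,by] = ab[x,y]):
   linear on Lambda^2 g and vanishing on [u,v]/\w + [v,w]/\u + [w,u]/\v
   (by multilinearity it suffices to test pure tensors u=ax, v=by, w=cw). *)
Definition is_2cocycle (K : fieldType) (A : comAlgType K) (k z : lmodType K)
  (br : k -> k -> k) (F : A -> k -> A -> k -> z) : Prop :=
  multilin4 F /\
  (forall a x b y, F a x b y = - F b y a x) /\
  (forall (a b c : A) (x y w : k),
      F (a * b) (br x y) c w + F (b * c) (br y w) a x
      + F (c * a) (br w x) b y = 0).

(* Coboundary: f(u /\ v) = - l'([u,v]) for a linear l' : g -> z; l' is
   encoded by the bilinear map L a x := l'(a (x) x). *)
Definition is_coboundary (K : fieldType) (A : comAlgType K) (k z : lmodType K)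
  (br : k -> k -> k) (F : A -> k -> A -> k -> z) : Prop :=
  exists L : A -> k -> z, bilin L /\
    forall a x b y, F a x b y = - L (a * b) (br x y).

(* The components f1, f2, f3 of f = f1 o p1 + f2 o p2 + f3 o p3, i.e.
   f_i = f o p^{-1} restricted to the i-th summand, evaluated on spanning
   elements of the summands:
   - f1 (a/\b (x) x\/y) = f(1/2 (ax/\by - bx/\ay))
   - f2 (a (x) x/\y)    = f(1/2 (ax/\1y + 1x/\ay))      ( = tilde f2(a)(x,y) )
   - f3 ((a\/b - ab\/1) (x) x/\y) = f(1/2 (ax/\by + bx/\ay)) - f2(ab (x) x/\y)
   The elements a/\b (x) x\/y span Lambda^2(A) (x) S^2(k), and the elements
   (a\/b - ab\/1) (x) x/\y span I_A (x) Lambda^2(k). *)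
Definition f1_gen (K : fieldType) (A : comAlgType K) (k z : lmodType K)
  (F : A -> k -> A -> k -> z) (a b : A) (x y : k) : z :=
  (2 : K)^-1 *: (F a x b y - F b x a y).

Definition f2_tilde (K : fieldType) (A : comAlgType K) (k z : lmodType K)
  (F : A -> k -> A -> k -> z) (a : A) (x y : k) : z :=
  (2 : K)^-1 *: (F a x 1 y + F 1 x a y).

Definition f3_gen (K : fieldType) (A : comAlgType K) (k z : lmodType K)
  (F : A -> k -> A -> k -> z) (a b : A) (x y : k) : z :=
  (2 : K)^-1 *: (F a x b y + F b x a y) - f2_tilde F (a * b) x y.

Definition d_k (K : fieldType) (k z : lmodType K) (br : k -> k -> k)
  (lam : k -> z) (x y : k) : z := - lam (br x y).

From mathcomp Require Import all_boot all_order all_algebra.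
Set Implicit Arguments. Unset Strict Implicit. Unset Printing Implicit Defensive.
Import GRing.Theory.
Local Open Scope ring_scope.

(* Both sides of the equivalence say that f(ax /\ by) depends only on
   ab (x) x /\ y, through -l(ab)([x,y]).  Indeed f1 = 0 means that f is
   symmetric in its A-arguments, and for such f, f3 = 0 means
   f(ax /\ by) = tilde f2(ab)(x,y). *)

Lemma scalerVnat2_double (K : fieldType) (z : lmodType K) (v : z) :
  (2 : K) != 0 -> (2 : K)^-1 *: (v + v) = v.
Proof.
move=> h2; rewrite -mulr2n -scaler_nat scalerA.
by rewrite mulVf // scale1r.
Qed.

Section ProductForms.

Variables (K : fieldType) (A : comAlgType K) (k z : lmodType K).
Hypothesis h2 : (2 : K) != 0.
Variable F : A -> k -> A -> k -> z.

Section MulForm.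

Variable G : A -> k -> k -> z.
Hypothesis FG : forall a x b y, F a x b y = G (a * b) x y.

Lemma f2_tilde_mul_form a x y : f2_tilde F a x y = G a x y.
Proof. by rewrite /f2_tilde !FG mulr1 mul1r scalerVnat2_double. Qed.

Lemma f1_gen_mul_form a b x y : f1_gen F a b x y = 0.
Proof. by rewrite /f1_gen !FG mulrC subrr scaler0. Qed.

Lemma f3_gen_mul_form a b x y : f3_gen F a b x y = 0.
Proof.
by rewrite /f3_gen f2_tilde_mul_form !FG [b * a]mulrC scalerVnat2_double // subrr.
Qed.

End MulForm.

Lemma f1_gen_eq0 a b x y : f1_gen F a b x y = 0 <-> F b x a y = F a x b y.
Proof.
rewrite /f1_gen; split=> [/eqP | ->]; last by rewrite subrr scaler0.
by rewrite scaler_eq0 invr_eq0 (negbTE h2) subr_eq0 => /eqP.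
Qed.

Lemma mul_form_f2_tilde :
  (forall a b x y, f1_gen F a b x y = 0) ->
  (forall a b x y, f3_gen F a b x y = 0) ->
  forall a x b y, F a x b y = f2_tilde F (a * b) x y.
Proof.
move=> f1_0 f3_0 a x b y; have /f1_gen_eq0 swapA := f1_0 a b x y.
apply/eqP; rewrite -subr_eq0 -(f3_0 a b x y) /f3_gen swapA.
by rewrite scalerVnat2_double.
Qed.

End ProductForms.

Theorem proposition3p6 (K : fieldType) (h2 : (2 : K) != 0)
  (A : comAlgType K) (k : lmodType K) (br : k -> k -> k)
  (hbr : is_lie_bracket br) (z : lmodType K)
  (F : A -> k -> A -> k -> z) (hF : is_2cocycle br F) :
  is_coboundary br F <->
  ((forall a b x y, f1_gen F a b x y = 0) /\
   (forall a b x y, f3_gen F a b x y = 0) /\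
   (exists l : A -> k -> z, bilin l /\
      forall a x y, f2_tilde F a x y = d_k br (l a) x y)).
Proof.
split.
- case=> l [bilin_l Fl].
  pose G c := d_k br (l c).
  have FG : forall a x b y, F a x b y = G (a * b) x y := Fl.
  split; first exact: f1_gen_mul_form FG.
  split; first exact: (f3_gen_mul_form h2 FG).
  by exists l; split=> // a x y; rewrite (f2_tilde_mul_form h2 FG).
- case=> f1_0 [f3_0 [l [bilin_l f2_l]]].
  exists l; split=> // a x b y.
  by rewrite (mul_form_f2_tilde h2 f1_0 f3_0) f2_l.
Qed.
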